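(* Let $D\geq 2$, let $\{|i\rangle\}_{i=0}^{D-1}$ be an orthonormal basis of $\mathbb{C}^D$, and define $P=\sum_{i,j}|i\rangle\langle j|\otimes|j\rangle\langle i|$, $P_{sym}=\frac12(I_{D^2}+P)$, $P_{as}=\frac12(I_{D^2}-P)$, and for $0\leq p\leq 1$ the Werner state $\rho_W=p\frac{2}{D^2+D}P_{sym}+(1-p)\frac{2}{D^2-D}P_{as}$ on $\mathbb{C}^D\otimes\mathbb{C}^D$. Then $$d_{\max}(\rho_W)=\frac{|2pD-D-1|}{D^2-1},$$ and this maximum is attained by every traceless unitary $U^B$ on $\mathbb{C}^D$.
   Context: For a state $\rho$ on $\mathbb{C}^M\otimes\mathbb{C}^N$ let $\rho_B=\mathrm{Tr}_A(\rho)$. A unitary $U^B$ on $\mathbb{C}^N$ is called cyclic for $\rho$ if $[\rho_B,U^B]=0$. Set $\rho_f=(I\otimes U^B)\rho(I\otimes U^{B\dagger})$ and define the Fu distance $d(\rho,U^B)=\frac{1}{\sqrt2}\|\rho-\rho_f\|_F$ (Frobenius norm $\|X\|_F=\sqrt{\mathrm{Tr}(X^\dagger X)}$). Define $d_{\max}(\rho)=\max\{d(\rho,U^B): U^B \text{ unitary},\ [\rho_B,U^B]=0\}$. *)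

From HB Require Import structures.
From mathcomp Require Import all_boot all_order all_algebra all_reals.
From mathcomp Require Import complex mxtens.
Set Implicit Arguments.
Unset Strict Implicit.
Unset Printing Implicit Defensive.
Import Order.TTheory GRing.Theory Num.Theory.
Import Num.Def.
Local Open Scope ring_scope.
Local Open Scope complex_scope.

Section QDefs.
Variable R : realType.
Local Notation C := R[i].

Definition adjmx {m n : nat} (X : 'M[C]_(m, n)) : 'M[C]_(n, m) :=
  (map_mx Num.conj X)^T.

Definition unitaryC {n : nat} (U : 'M[C]_n) : Prop :=
  U *m adjmx U = 1%:M /\ adjmx U *m U = 1%:M.

Definition frob {m n : nat} (X : 'M[C]_(m, n)) : C :=
  2.-root (\tr (adjmx X *m X)).

(* partial trace over the first factor A of C^M (x) C^N, with the
   Kronecker indexing convention of mxtens (index (i,j) <-> |i>|j>) *)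
Definition ptraceA {M N : nat} (rho : 'M[C]_(M * N)) : 'M[C]_N :=
  \matrix_(j, k) \sum_(i < M) rho (mxtens_index (i, j)) (mxtens_index (i, k)).

Definition cyclic_unitary {M N : nat} (rho : 'M[C]_(M * N)) (U : 'M[C]_N)
  : Prop := unitaryC U /\ ptraceA rho *m U = U *m ptraceA rho.

Definition rho_f {M N : nat} (rho : 'M[C]_(M * N)) (U : 'M[C]_N)
  : 'M[C]_(M * N) :=
  ((1%:M : 'M[C]_M) *t U) *m rho *m ((1%:M : 'M[C]_M) *t adjmx U).

Definition fu_dist {M N : nat} (rho : 'M[C]_(M * N)) (U : 'M[C]_N) : C :=
  frob (rho - rho_f rho U) / 2.-root 2.

Definition is_dmax {M N : nat} (rho : 'M[C]_(M * N)) (v : C) : Prop :=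
  (exists U, cyclic_unitary rho U /\ fu_dist rho U = v) /\
  (forall U, cyclic_unitary rho U -> fu_dist rho U <= v).

Definition swapP (D : nat) : 'M[C]_(D * D) :=
  \sum_(i < D) \sum_(j < D) (delta_mx i j *t delta_mx j i).

Definition Psym (D : nat) : 'M[C]_(D * D) := 2^-1 *: (1%:M + swapP D).
Definition Pas (D : nat) : 'M[C]_(D * D) := 2^-1 *: (1%:M - swapP D).

Definition werner (D : nat) (p : R) : 'M[C]_(D * D) :=
  (p%:C * 2 / (D%:R ^+ 2 + D%:R)) *: Psym D
  + ((1 - p)%:C * 2 / (D%:R ^+ 2 - D%:R)) *: Pas D.

End QDefs.

From HB Require Import structures.
From mathcomp Require Import all_boot all_order all_algebra all_reals.
From mathcomp Require Import complex mxtens.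
From mathcomp Require Import fingroup perm ring lra.
Import Order.TTheory GRing.Theory Num.Theory.
Local Open Scope ring_scope.

(* The Werner state is an isotropic combination a I + b P of the identity and
   the swap P.  Conjugation by I (x) U fixes I and sends P to the Hermitian
   involution Q = (I (x) U) P (I (x) U^dagger), so rho - rho_f = b (P - Q).
   Since P (I (x) U) P = U (x) I, Tr (P Q) = |Tr U|^2 and hence
   ||P - Q||_F^2 = 2 (D^2 - |Tr U|^2): the Fu distance is
   |b| sqrt (D^2 - |Tr U|^2), largest exactly for traceless U.  The reduced
   state of rho_W is scalar, so every unitary is cyclic, and the cyclic shift
   of the basis is a traceless one. *)

Lemma big_mxtens_index (V : nmodType) m n (F : 'I_(m * n) -> V) :
  \sum_k F k = \sum_(i < m) \sum_(j < n) F (mxtens_index (i, j)).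
Proof.
rewrite pair_big (reindex (@mxtens_index m n)) /=; first by apply: eq_bigr => -[].
by exists (@mxtens_unindex m n) => k _; rewrite (mxtens_indexK, mxtens_unindexK).
Qed.

Lemma sum_delta (V : pzSemiRingType) n (a : 'I_n) (F : 'I_n -> V) :
  \sum_i (a == i)%:R * F i = F a.
Proof.
rewrite (bigD1 a) //= eqxx mul1r big1 ?addr0 // => i ne_ia.
by rewrite eq_sym (negPf ne_ia) mul0r.
Qed.

Lemma mxtens_index_eq m n (a c : 'I_m) (b d : 'I_n) :
  (mxtens_index (a, b) == mxtens_index (c, d)) = (a == c) && (b == d).
Proof. by rewrite (can_eq (@mxtens_indexK m n)) xpair_eqE. Qed.

Section TensorTrace.
Variable R : comPzRingType.

Lemma tensmx11 m n : (1%:M : 'M[R]_m) *t (1%:M : 'M[R]_n) = 1%:M.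
Proof.
apply/matrixP => k l.
case: (mxtens_indexP k) => a b; case: (mxtens_indexP l) => c d.
by rewrite tensmxE !mxE mxtens_index_eq -natrM mulnb.
Qed.

Lemma mxtrace_tens m n (A : 'M[R]_m) (B : 'M[R]_n) : \tr (A *t B) = \tr A * \tr B.
Proof.
rewrite /mxtrace big_mxtens_index mulr_suml; apply: eq_bigr => i _.
by rewrite mulr_sumr; apply: eq_bigr => j _; rewrite tensmxE.
Qed.

End TensorTrace.

Local Open Scope complex_scope.

Section Adjoint.
Variable R : realType.
Local Notation C := R[i].

Lemma adjmxM m n k (A : 'M[C]_(m, n)) (B : 'M[C]_(n, k)) :
  adjmx (A *m B) = adjmx B *m adjmx A.
Proof. by rewrite /adjmx map_mxM trmx_mul. Qed.

Lemma adjmxK m n (A : 'M[C]_(m, n)) : adjmx (adjmx A) = A.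
Proof. by apply/matrixP => i j; rewrite !mxE conjCK. Qed.

Lemma adjmxB m n (A B : 'M[C]_(m, n)) : adjmx (A - B) = adjmx A - adjmx B.
Proof. by apply/matrixP => i j; rewrite !mxE rmorphB. Qed.

Lemma adjmxZ m n a (A : 'M[C]_(m, n)) : adjmx (a *: A) = a^* *: adjmx A.
Proof. by apply/matrixP => i j; rewrite !mxE rmorphM. Qed.

Lemma adjmx1 n : adjmx (1%:M : 'M[C]_n) = 1%:M.
Proof. by rewrite /adjmx map_mx1 trmx1. Qed.

Lemma adjmx_tens m n k l (A : 'M[C]_(m, n)) (B : 'M[C]_(k, l)) :
  adjmx (A *t B) = adjmx A *t adjmx B.
Proof. by rewrite /adjmx map_mxT trmx_tens. Qed.

Lemma mxtrace_adjmx n (A : 'M[C]_n) : \tr (adjmx A) = (\tr A)^*.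
Proof. by rewrite /adjmx mxtrace_tr trace_map_mx. Qed.

Lemma mxtrace_adjmx_mul_ge0 m n (X : 'M[C]_(m, n)) : 0 <= \tr (adjmx X *m X).
Proof.
apply: sumr_ge0 => j _; rewrite mxE; apply: sumr_ge0 => i _.
by rewrite !mxE mulrC mul_conjC_ge0.
Qed.
End Adjoint.

Section Conjugation.
Variable R : realType.
Local Notation C := R[i].
Variables (m n : nat) (U : 'M[C]_n).

Lemma rho_f_lin a b (A B : 'M[C]_(m * n)) :
  rho_f (a *: A + b *: B) U = a *: rho_f A U + b *: rho_f B U.
Proof. by rewrite /rho_f mulmxDr mulmxDl -!scalemxAr -!scalemxAl. Qed.

Lemma adjmx_rho_f (A : 'M[C]_(m * n)) : adjmx (rho_f A U) = rho_f (adjmx A) U.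
Proof. by rewrite /rho_f !adjmxM !adjmx_tens adjmxK adjmx1 mulmxA. Qed.

Hypothesis unitaryU : unitaryC U.

Lemma rho_f1 : rho_f (1%:M : 'M[C]_(m * n)) U = 1%:M.
Proof.
by case: unitaryU => hUU' _; rewrite /rho_f mulmx1 tensmx_mul mulmx1 hUU' tensmx11.
Qed.

Lemma rho_fM (A B : 'M[C]_(m * n)) : rho_f A U *m rho_f B U = rho_f (A *m B) U.
Proof.
case: unitaryU => _ hU'U.
rewrite /rho_f !mulmxA -[_ *m _ *m (1%:M *t U)]mulmxA tensmx_mul mulmx1 hU'U tensmx11.
by rewrite mulmx1.
Qed.

End Conjugation.

Section Swap.
Variable R : realType.
Local Notation C := R[i].
Variable n : nat.
Local Notation P := (swapP R n).

Lemma swapPE (a b c d : 'I_n) :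
  P (mxtens_index (a, b)) (mxtens_index (c, d)) = (a == d)%:R * (b == c)%:R.
Proof.
rewrite /swapP summxE; under eq_bigr do rewrite summxE.
under eq_bigr do under eq_bigr do rewrite tensmxE !mxE -!mulnb !natrM -!mulrA.
under eq_bigr do rewrite -mulr_sumr.
rewrite sum_delta; under eq_bigr do rewrite mulrCA.
by rewrite sum_delta mulrC [c == b]eq_sym [d == a]eq_sym.
Qed.

Lemma swapP_mulmxE k (X : 'M[C]_(n * n, k)) a b l :
  (P *m X) (mxtens_index (a, b)) l = X (mxtens_index (b, a)) l.
Proof.
rewrite mxE big_mxtens_index.
under eq_bigr do under eq_bigr do rewrite swapPE [_ * (b == _)%:R]mulrC -mulrA.
under eq_bigr do rewrite -mulr_sumr.
by rewrite sum_delta sum_delta.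
Qed.

Lemma mulmx_swapPE k (X : 'M[C]_(k, n * n)) l c d :
  (X *m P) l (mxtens_index (c, d)) = X l (mxtens_index (d, c)).
Proof.
rewrite mxE big_mxtens_index.
under eq_bigr => i _ do under eq_bigr => j _ do
  rewrite swapPE (eq_sym i) (eq_sym j) mulrC -mulrA.
under eq_bigr do rewrite -mulr_sumr.
by rewrite sum_delta sum_delta.
Qed.

Lemma swapP_tens (A B : 'M[C]_n) : P *m (A *t B) *m P = B *t A.
Proof.
apply/matrixP => k l.
case: (mxtens_indexP k) => a b; case: (mxtens_indexP l) => c d.
by rewrite mulmx_swapPE swapP_mulmxE !tensmxE mulrC.
Qed.

Lemma swapP_sqr : P *m P = 1%:M.
Proof.
apply/matrixP => k l.
case: (mxtens_indexP k) => a b; case: (mxtens_indexP l) => c d.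
by rewrite swapP_mulmxE swapPE !mxE mxtens_index_eq -natrM mulnb andbC.
Qed.

Lemma adjmx_swapP : adjmx P = P.
Proof.
apply/matrixP => k l.
case: (mxtens_indexP k) => a b; case: (mxtens_indexP l) => c d.
by rewrite !mxE !swapPE rmorphM !rmorph_nat [c == b]eq_sym [d == a]eq_sym mulrC.
Qed.

End Swap.

Section Isotropic.
Variable R : realType.
Local Notation C := R[i].
Variable n : nat.
Local Notation P := (swapP R n).

Lemma mxtrace_swapP_rho_f (U : 'M[C]_n) : \tr (P *m rho_f P U) = `|\tr U| ^+ 2.
Proof.
rewrite /rho_f !mulmxA swapP_tens tensmx_mul mulmx1 mul1mx.
by rewrite mxtrace_tens mxtrace_adjmx normCK.
Qed.

Lemma gram_trace_swapP_sub_rho_f (U : 'M[C]_n) : unitaryC U ->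
  let Y := P - rho_f P U in
  \tr (adjmx Y *m Y) = 2 * (n%:R ^+ 2 - `|\tr U| ^+ 2).
Proof.
move=> unitaryU Y.
have adjQ : adjmx (rho_f P U) = rho_f P U by rewrite adjmx_rho_f adjmx_swapP.
have QQ : rho_f P U *m rho_f P U = 1%:M by rewrite rho_fM // swapP_sqr rho_f1.
rewrite /Y adjmxB adjmx_swapP adjQ mulmxBl !mulmxBr swapP_sqr QQ.
rewrite !raddfB /= [\tr (rho_f _ _ *m _)]mxtrace_mulC mxtrace_swapP_rho_f mxtrace1 natrM.
ring.
Qed.

Lemma ptraceA_isotropic a b :
  ptraceA (a *: 1%:M + b *: P) = (a * n%:R + b)%:M.
Proof.
apply/matrixP => j k; rewrite !mxE.
under eq_bigr do rewrite !mxE swapPE mxtens_index_eq eqxx.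
rewrite big_split /= sumr_const card_ord.
under eq_bigr => i _ do rewrite mulrCA (eq_sym i k).
rewrite sum_delta.
by case: (j == k); rewrite ?(mulr1, mulr0, mul0rn, add0r, mulr1n, mulr0n) // mulr_natr.
Qed.

Lemma normC_mxtrace_unitary_le (U : 'M[C]_n) : unitaryC U ->
  `|\tr U| ^+ 2 <= n%:R ^+ 2.
Proof.
move=> unitaryU; rewrite -subr_ge0 -(@pmulr_rge0 _ 2) //.
by rewrite -gram_trace_swapP_sub_rho_f // mxtrace_adjmx_mul_ge0.
Qed.

Variables (a b : C) (U : 'M[C]_n).
Hypothesis unitaryU : unitaryC U.

Lemma cyclic_unitary_isotropic : cyclic_unitary (a *: 1%:M + b *: P) U.
Proof. by split => //; rewrite ptraceA_isotropic scalar_mxC. Qed.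

Lemma fu_dist_isotropic :
  fu_dist (a *: 1%:M + b *: P) U = `|b| * sqrtC (n%:R ^+ 2 - `|\tr U| ^+ 2).
Proof.
rewrite /fu_dist; have -> : a *: 1%:M + b *: P - rho_f (a *: 1%:M + b *: P) U = b *: (P - rho_f P U).
  by rewrite rho_f_lin rho_f1 // scalerBr opprD addrACA subrr add0r.
rewrite /frob adjmxZ -scalemxAl -scalemxAr !mxtraceZ.
rewrite gram_trace_swapP_sub_rho_f // mulrA -normCKC.
rewrite rootCMl ?exprn_ge0 // exprCK // rootCMl // [sqrtC 2 * _]mulrC mulrA mulfK //.
by rewrite rootC_eq0 // pnatr_eq0.
Qed.

Lemma fu_dist_isotropic_le : fu_dist (a *: 1%:M + b *: P) U <= `|b| * n%:R.
Proof.
rewrite fu_dist_isotropic ler_wpM2l // -[leRHS](@exprCK _ 2 n%:R) //.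
rewrite ler_rootCl ?qualifE /= ?subr_ge0 ?normC_mxtrace_unitary_le //.
by rewrite gerBl exprn_ge0.
Qed.

Lemma fu_dist_isotropic_traceless :
  \tr U = 0 -> fu_dist (a *: 1%:M + b *: P) U = `|b| * n%:R.
Proof.
by move=> trU0; rewrite fu_dist_isotropic trU0 normr0 expr0n subr0 exprCK.
Qed.

End Isotropic.

Lemma Psym_Pas_comb (R : realType) n (c d : R[i]) :
  c *: Psym R n + d *: Pas R n = ((c + d) / 2) *: 1%:M + ((c - d) / 2) *: swapP R n.
Proof. by apply/matrixP => i j; rewrite !mxE; ring. Qed.

Section Werner.
Variable R : realType.
Local Notation C := R[i].

Lemma normc_real (x : R) : `|x%:C| = `|x|%:C.
Proof. by rewrite normc_def /= expr0n /= addr0 sqrtr_sqr. Qed.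

Lemma werner_isotropic D p : werner D p =
  (p / (D%:R ^+ 2 + D%:R) + (1 - p) / (D%:R ^+ 2 - D%:R))%:C *: 1%:M +
  (p / (D%:R ^+ 2 + D%:R) - (1 - p) / (D%:R ^+ 2 - D%:R))%:C *: swapP R D.
Proof.
have halve (y z : C) : y * 2 / z / 2 = y / z.
  by rewrite mulrAC mulfK // pnatr_eq0.
rewrite /werner (@Psym_Pas_comb R D) mulrDl mulrBl !halve.
by rewrite !(rmorphB, rmorphD, rmorph1, rmorphXn, rmorphM, fmorphV, rmorph_nat).
Qed.

Lemma norm_werner_swap_weight (D : nat) (p : R) : (2 <= D)%N ->
  `|p / (D%:R ^+ 2 + D%:R) - (1 - p) / (D%:R ^+ 2 - D%:R)| * D%:R =
  `|2 * p * D%:R - D%:R - 1| / (D%:R ^+ 2 - 1).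
Proof.
move=> D_ge2; have : (2 : R) <= D%:R by rewrite (ler_nat R 2 D).
set d : R := D%:R => d_ge2.
have d2B1_gt0 : 0 < d ^+ 2 - 1 by nra.
rewrite -[d in _ * d]ger0_norm ?(le_trans _ d_ge2) // -normrM.
rewrite -[d ^+ 2 - 1](ger0_norm (ltW d2B1_gt0)) -normf_div; congr `|_|.
field.
by rewrite !lt0r_neq0 //; nra.
Qed.

End Werner.

Section CyclicShift.
Variable R : realType.
Variable n : nat.

Definition cyclic_shift : 'M[R[i]]_n := perm_mx (perm (@ordS_inj n)).

Lemma unitary_perm_mx (s : 'S_n) : unitaryC (perm_mx s : 'M[R[i]]_n).
Proof.
have adj_s : adjmx (perm_mx s : 'M[R[i]]_n) = perm_mx s^-1.
  by rewrite /adjmx -tr_perm_mx map_perm_mx.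
by rewrite /unitaryC adj_s -!perm_mxM mulgV mulVg perm_mx1.
Qed.

Lemma unitary_cyclic_shift : unitaryC cyclic_shift.
Proof. exact: unitary_perm_mx. Qed.

Lemma mxtrace_cyclic_shift : (2 <= n)%N -> \tr cyclic_shift = 0.
Proof.
move=> n_ge2; rewrite /mxtrace big1 // => i _.
rewrite /cyclic_shift perm_mxEsub !mxE permE.
suff /negPf -> : ordS i != i by [].
apply/eqP => /(congr1 val) /=; move: (nat_of_ord i) (ltn_ord i) => k lt_kn.
case: (ltngtP k.+1 n) => [lt_k1n | | eq_k1n].
- by rewrite modn_small // => /esym /n_Sn.
- by rewrite ltnNge lt_kn.
- by rewrite -eq_k1n modnn => k0; move: n_ge2; rewrite -eq_k1n -k0.
Qed.

End CyclicShift.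

Theorem theorem2 (R : realType) (D : nat) (p : R) :
  (2 <= D)%N -> 0 <= p <= 1 ->
  is_dmax (werner D p)
    ((`|2 * p * D%:R - D%:R - 1| / (D%:R ^+ 2 - 1))%:C) /\
  (forall U : 'M[R[i]]_D, unitaryC U -> \tr U = 0 ->
     fu_dist (werner D p) U =
       (`|2 * p * D%:R - D%:R - 1| / (D%:R ^+ 2 - 1))%:C).
Proof.
(* The bound holds for every real p. *)
move=> D_ge2 _; rewrite werner_isotropic.
set a := (_ + _)%:C; set b := (_ - _)%:C.
have <- : `|b| * D%:R = (`|2 * p * D%:R - D%:R - 1| / (D%:R ^+ 2 - 1))%:C.
  by rewrite normc_real -norm_werner_swap_weight // rmorphM rmorph_nat.
split=> [|U unitaryU]; last exact: fu_dist_isotropic_traceless.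
split=> [|U [unitaryU _]]; last exact: fu_dist_isotropic_le.
have unitary_shift := unitary_cyclic_shift R D.
exists (cyclic_shift R D); split; first exact: cyclic_unitary_isotropic.
by apply: fu_dist_isotropic_traceless; last exact: mxtrace_cyclic_shift.
Qed.
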